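(* Let $I$ be a connected and locally connected topological space and $h:I\to\mathbb{R}$ a positive continuous function attaining its lower bound at $v\in I$. (i) If $y\in I$, $\lambda\le h(y)$, $z\in C_{y,\lambda}$ and $h(z)>\lambda$, then $z$ lies in the interior of $C_{y,\lambda}$. (ii) If $x,x'\in I$, $\lambda\le h(x)$, $\lambda'\le h(x')$, $C_{x',\lambda'}\subset C_{x,\lambda}$ and $\lambda'>\lambda$, then $C_{x,\lambda}$ is a neighbourhood of $C_{x',\lambda'}$.
   Context: For $x\in I$ and $\lambda\le h(x)$, $C_{x,\lambda}$ denotes the maximal connected subset of $\{y\in I: h(y)\ge\lambda\}$ containing $x$. *)

From HB Require Import structures.
From mathcomp Require Import all_boot all_order all_algebra.
From mathcomp Require Import all_classical all_reals all_analysis.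
Set Implicit Arguments. Unset Strict Implicit. Unset Printing Implicit Defensive.
Import Order.TTheory GRing.Theory Num.Theory numFieldNormedType.Exports.
Local Open Scope classical_set_scope.
Local Open Scope ring_scope.

Definition locally_connected (T : topologicalType) : Prop :=
  forall (x : T) (U : set T), nbhs x U ->
    exists V : set T, [/\ open V, V x, connected V & V `<=` U].

Definition Ccomp (T : topologicalType) (R : realType) (h : T -> R)
  (x : T) (lambda : R) : set T :=
  connected_component [set y | lambda <= h y] x.

Definition nbhs_of_set (T : topologicalType) (A B : set T) : Prop :=
  exists U : set T, [/\ open U, B `<=` U & U `<=` A].

From HB Require Import structures.
From mathcomp Require Import all_boot all_order all_algebra.
From mathcomp Require Import all_classical all_reals all_analysis.
Import Order.TTheory GRing.Theory Num.Theory numFieldNormedType.Exports.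
Local Open Scope classical_set_scope.
Local Open Scope ring_scope.

(* If h z > lambda, continuity gives a neighbourhood of z on which h > lambda,
   and local connectedness shrinks it to a connected open one; being connected,
   it lies in the component C_{y,lambda} of z.  For (ii), every point of
   C_{x',lambda'} has h >= lambda' > lambda, so by (i) the interior of
   C_{x,lambda} is an open set between the two components. *)

Lemma connected_component_nbhs (T : topologicalType) (A : set T) (x z : T) :
  locally_connected T -> connected_component A x z -> nbhs z A ->
  nbhs z (connected_component A x).
Proof.
move=> hlc Axz /hlc [V [oV Vz cV VA]].
apply: filterS (open_nbhs_nbhs (conj oV Vz)) => w Vw.
rewrite (same_connected_component Axz); exact: connected_component_max Vw.
Qed.

Lemma nbhs_of_set_interior (T : topologicalType) (A B : set T) :
  B `<=` interior A -> nbhs_of_set A B.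
Proof.
by move=> BA; exists (interior A); split; [exact: open_interior | | exact: interior_subset].
Qed.

Section Superlevel_components.
Variables (R : realType) (T : topologicalType) (h : T -> R).
Hypothesis hcont : continuous h.

Lemma superlevel_nbhs (lambda : R) (z : T) :
  lambda < h z -> nbhs z [set w | lambda <= h w].
Proof.
move=> lz; have hz : nbhs z [set w | lambda < h w].
  have : nbhs (h z) [set r : R | lambda < r].
    by apply: open_nbhs_nbhs; split; [exact: open_gt | exact: lz].
  exact: (hcont z).
by move: hz; apply: filterS => w /ltW.
Qed.

Hypothesis hlc : locally_connected T.

Lemma Ccomp_interior (y z : T) (lambda : R) :
  Ccomp h y lambda z -> lambda < h z -> interior (Ccomp h y lambda) z.
Proof.
by move=> Cz /superlevel_nbhs; apply: connected_component_nbhs.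
Qed.

Lemma Ccomp_nbhs_of_set (x x' : T) (lambda lambda' : R) :
  Ccomp h x' lambda' `<=` Ccomp h x lambda -> lambda < lambda' ->
  nbhs_of_set (Ccomp h x lambda) (Ccomp h x' lambda').
Proof.
move=> sub ll'; apply: nbhs_of_set_interior => z Cz.
apply: Ccomp_interior; first exact: sub.
exact: lt_le_trans ll' (connected_component_sub Cz).
Qed.

End Superlevel_components.

Theorem mainTheorem6 (R : realType) (I : topologicalType) (h : I -> R) (v : I)
  (hconn : connected [set: I]) (hlc : locally_connected I)
  (hcont : continuous h) (hpos : forall x, 0 < h x)
  (hmin : forall x, h v <= h x) :
  (forall (y : I) (lambda : R) (z : I),
      lambda <= h y -> Ccomp h y lambda z -> lambda < h z ->
      interior (Ccomp h y lambda) z) /\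
  (forall (x x' : I) (lambda lambda' : R),
      lambda <= h x -> lambda' <= h x' ->
      Ccomp h x' lambda' `<=` Ccomp h x lambda -> lambda < lambda' ->
      nbhs_of_set (Ccomp h x lambda) (Ccomp h x' lambda')).
Proof.
split=> [y lambda z _ | x x' lambda lambda' _ _].
- exact: Ccomp_interior.
- exact: Ccomp_nbhs_of_set.
Qed.
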